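(* Let $S$ be an instance of Max $r(n)$-Lin-2 AA (with parameter $k$) in which no two equations have the same left-hand side, i.e. $\alpha_j\neq\alpha_p$ for all $j\neq p$. Suppose that some run of Algorithm $\mathcal{A}$ (defined in the context) on $S$ marks $k$ equations. Then $S$ is a YES-instance, i.e. there is an assignment of values in $\mathbb{F}_2$ to $z_1,\dots,z_n$ such that the total weight of satisfied equations is at least $(W+k)/2$.
   Context: Max $r(n)$-Lin-2 AA: for a fixed function $r(n)$, an instance is a system $S$ of $m$ linear equations over $\mathbb{F}_2$ in variables $z_1,\dots,z_n$, Equation $j$ being $\sum_{i\in\alpha_j} z_i=b_j$ with $\emptyset\neq\alpha_j\subseteq\{1,\dots,n\}$, $|\alpha_j|\le r=r(n)$, $b_j\in\mathbb{F}_2$, and a positive integer weight $w_j$; together with a nonnegative integer parameter $k$. It is assumed that every variable appears in at least one equation. Let $W=w_1+\cdots+w_m$. The instance is a YES-instance if some assignment satisfies equations of total weight at least $(W+k)/2$. Combining rule: if two equations $\sum_{i\in\alpha}z_i=b'$ (weight $w'$) and $\sum_{i\in\alpha}z_i=b''$ (weight $w''$) have the same left-hand side, replace them by one equation with that left-hand side: if $b'=b''$, with right-hand side $b'$ and weight $w'+w''$; otherwise, the one of larger weight, with new weight $|w'-w''|$; an equation of resulting weight $0$ is deleted. Algorithm $\mathcal{A}$: initially nothing is marked. While $S\neq\emptyset$ and fewer than $k$ equations are marked: (1) for each $i$ compute $\rho_i$, the number of equations currently in $S$ containing $z_i$; (2) choose a variable $z_l$ still occurring in $S$ with minimum $\rho_l$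 and mark it; (3) choose an arbitrary equation $\sum_{i\in\alpha}z_i=b$ of $S$ containing $z_l$; (4) mark this equation and delete it from $S$; (5) replace every other equation $\sum_{i\in\alpha'}z_i=b'$ of $S$ containing $z_l$ by $\sum_{i\in\alpha\triangle\alpha'}z_i=b+b'$ (keeping its weight), where $\triangle$ is symmetric difference; (6) apply the combining rule exhaustively (deleting equations of weight $0$). *)

From mathcomp Require Import all_boot.
Set Implicit Arguments. Unset Strict Implicit. Unset Printing Implicit Defensive.

(* An equation  sum_{i in alpha} z_i = b  with weight w, over variables 'I_n. *)
Definition equation (n : nat) := ({set 'I_n} * bool * nat)%type.
Definition eq_lhs {n} (e : equation n) : {set 'I_n} := e.1.1.
Definition eq_rhs {n} (e : equation n) : bool := e.1.2.
Definition eq_w {n} (e : equation n) : nat := e.2.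

Definition symdiff {n} (A B : {set 'I_n}) : {set 'I_n} := (A :\: B) :|: (B :\: A).

Definition valid_instance (r : nat -> nat) {n} (S : seq (equation n)) : Prop :=
  (forall e, e \in S -> [/\ eq_lhs e != set0, #|eq_lhs e| <= r n & 0 < eq_w e])
  /\ (forall i : 'I_n, has (fun e => i \in eq_lhs e) S).

Definition total_weight {n} (S : seq (equation n)) : nat := \sum_(e <- S) eq_w e.

Definition satisfies {n} (z : 'I_n -> bool) (e : equation n) : bool :=
  \big[addb/false]_(i in eq_lhs e) z i == eq_rhs e.

Definition sat_weight {n} (z : 'I_n -> bool) (S : seq (equation n)) : nat :=
  \sum_(e <- S | satisfies z e) eq_w e.

Definition yes_instance {n} (S : seq (equation n)) (k : nat) : Prop :=
  exists z : 'I_n -> bool, total_weight S + k <= 2 * sat_weight z S.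

(* Combining rule applied to two equations with the same LHS: result
   (None if the resulting weight is 0, i.e. the equation is deleted). *)
Definition combine {n} (e1 e2 : equation n) : option (equation n) :=
  let w := if eq_rhs e1 == eq_rhs e2 then (eq_w e1 + eq_w e2)
           else if eq_w e2 <= eq_w e1 then eq_w e1 - eq_w e2 else eq_w e2 - eq_w e1 in
  let b := if eq_rhs e1 == eq_rhs e2 then eq_rhs e1
           else if eq_w e2 <= eq_w e1 then eq_rhs e1 else eq_rhs e2 in
  if w == 0 then None else Some (eq_lhs e1, b, w).

Inductive combine_step {n} : seq (equation n) -> seq (equation n) -> Prop :=
| CombStep S1 S2 S3 e1 e2 :
    eq_lhs e1 = eq_lhs e2 ->
    combine_step (S1 ++ e1 :: S2 ++ e2 :: S3)
                 (S1 ++ S2 ++ S3 ++ (if combine e1 e2 is Some e then [:: e] else [::])).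

Inductive combine_star {n} : seq (equation n) -> seq (equation n) -> Prop :=
| CombRefl S : combine_star S S
| CombTrans S S' S'' : combine_step S S' -> combine_star S' S'' -> combine_star S S''.

Definition combine_exhaustive {n} (S S' : seq (equation n)) : Prop :=
  combine_star S S' /\ uniq (map eq_lhs S').

Definition rho {n} (S : seq (equation n)) (i : 'I_n) : nat :=
  count (fun e => i \in eq_lhs e) S.

Definition occurs {n} (S : seq (equation n)) (i : 'I_n) : bool :=
  has (fun e => i \in eq_lhs e) S.

(* One iteration of the while-loop of Algorithm A, with parameter k:
   state = (current system, number of marked equations). *)
Inductive alg_step (k : nat) {n} : seq (equation n) -> nat -> seq (equation n) -> nat -> Prop :=
| AlgStep S m (l : 'I_n) S1 S2 e S' :
    S != [::] -> m < k ->
    occurs S l ->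
    (forall i, occurs S i -> rho S l <= rho S i) ->
    S = S1 ++ e :: S2 ->
    l \in eq_lhs e ->
    combine_exhaustive
      (map (fun e' => if l \in eq_lhs e'
                      then (symdiff (eq_lhs e) (eq_lhs e'), eq_rhs e (+) eq_rhs e', eq_w e')
                      else e') (S1 ++ S2)) S' ->
    alg_step k S m S' m.+1.

Inductive alg_run (k : nat) {n} : seq (equation n) -> nat -> seq (equation n) -> nat -> Prop :=
| RunRefl S m : alg_run k S m S m
| RunStep S m S' m' S'' m'' :
    alg_step k S m S' m' -> alg_run k S' m' S'' m'' -> alg_run k S m S'' m''.

From mathcomp Require Import all_boot all_order all_algebra zify.
Import GRing.Theory Num.Theory Order.TTheory.
Set Implicit Arguments. Unset Strict Implicit. Unset Printing Implicit Defensive.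
Local Open Scope ring_scope.

(* Measure an assignment z by its excess: the weight of the equations it
   satisfies minus the weight of those it falsifies, so that z witnesses a
   YES-instance iff its excess is at least k.  Combining equations leaves the
   excess of every assignment unchanged.  In a step of the algorithm, the
   marked equation e contains the marked variable l; flipping l in an
   assignment of the new system if necessary makes it satisfy e as well as the
   same equations as before the substitution, so every step raises the best
   attainable excess by at least the weight of e, hence by at least 1.  When k
   equations are marked, some assignment of the remaining system has
   nonnegative excess, because the excesses over all assignments average to 0
   (each equation has a nonempty left-hand side).  Distinct left-hand sides in
   the input keep every substituted left-hand side nonempty. *)

Section Parity.
Variable n : nat.
Implicit Types (z : 'I_n -> bool) (A B : {set 'I_n}) (e : equation n).

Definition parity z A : bool := \big[addb/false]_(i in A) z i.

Lemma satisfiesE z e : satisfies z e = (parity z (eq_lhs e) == eq_rhs e).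
Proof. by []. Qed.

Lemma parity_symdiff z A B : parity z (symdiff A B) = parity z A (+) parity z B.
Proof.
rewrite /parity !(big_mkcond (fun i => i \in _)) -big_split /=.
apply: eq_bigr => i _; rewrite /symdiff in_setU !in_setD.
by case: (i \in A); case: (i \in B); case: (z i).
Qed.

Lemma symdiff_eq0 A B : (symdiff A B == set0) = (A == B).
Proof.
apply/eqP/eqP => [/setP HAB | ->]; apply/setP => i; last first.
  by rewrite /symdiff !inE; case: (i \in B).
by have := HAB i; rewrite /symdiff !inE; case: (i \in A); case: (i \in B).
Qed.

Definition flip (l : 'I_n) z : {ffun 'I_n -> bool} := [ffun j => (j == l) (+) z j].

Lemma flipK l : involutive (fun y : {ffun 'I_n -> bool} => flip l y).
Proof. by move=> y; apply/ffunP => j; rewrite !ffunE addbA addbb. Qed.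

Lemma parity_flip l z A : parity (flip l z) A = (l \in A) (+) parity z A.
Proof.
rewrite /parity; have [Hl | Hl] := boolP (l \in A).
  rewrite !(bigD1 l Hl) /= ffunE eqxx -addbA addTb.
  congr (~~ (_ (+) _)); apply: eq_bigr => i /andP [_ /negbTE Hi].
  by rewrite ffunE Hi.
by apply: eq_bigr => i Hi; rewrite ffunE; case: eqP Hi => // ->; rewrite (negbTE Hl).
Qed.

Lemma satisfies_flip l z e :
  satisfies (flip l z) e = (l \in eq_lhs e) (+) satisfies z e.
Proof.
rewrite !satisfiesE parity_flip.
by case: (l \in _); case: (parity z _); case: (eq_rhs e).
Qed.

End Parity.

Section Excess.
Variable n : nat.
Implicit Types (z : 'I_n -> bool) (e : equation n) (T : seq (equation n)).

Definition signed_weight z e : int :=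
  if satisfies z e then (eq_w e)%:Z else - (eq_w e)%:Z.

Definition excess z T : int := \sum_(e <- T) signed_weight z e.

Lemma excess_sat_weight z T :
  (total_weight T)%:Z + excess z T = (2 * sat_weight z T)%N%:Z.
Proof.
elim: T => [|e T IH]; first by rewrite /total_weight /sat_weight /excess !big_nil.
rewrite /total_weight /sat_weight /excess !big_cons /signed_weight.
rewrite -/(total_weight T) -/(sat_weight z T) -/(excess z T) PoszD addrACA IH.
case: (satisfies z e); last by rewrite subrr add0r.
by rewrite mulnDr PoszD !mul2n -!addnn !PoszD.
Qed.

Lemma signed_weight_flip l z e :
  signed_weight (flip l z) e
  = if l \in eq_lhs e then - signed_weight z e else signed_weight z e.
Proof.
rewrite /signed_weight satisfies_flip.
by case: (l \in _); case: (satisfies z e); rewrite /= ?opprK.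
Qed.

Lemma signed_weight_combine z e1 e2 :
  eq_lhs e1 = eq_lhs e2 ->
  signed_weight z e1 + signed_weight z e2
  = if combine e1 e2 is Some e then signed_weight z e else 0.
Proof.
case: e1 e2 => [[A b1] w1] [[A2 b2] w2]; rewrite /eq_lhs /= => HA; subst A2.
rewrite /combine /signed_weight /satisfies /eq_lhs /eq_rhs /eq_w /=.
case: b1; case: b2 => /=; case: (leqP w2 w1) => ? /=.
all: match goal with |- context [if ?c == 0%N then _ else _] =>
       case: (c =P 0%N) => ? /= end.
all: by case: (\big[addb/false]_(i in A) z i) => /=; lia.
Qed.

Lemma excess_combine_step z T T' : combine_step T T' -> excess z T' = excess z T.
Proof.
case=> T1 T2 T3 e1 e2 /(signed_weight_combine z) Hcomb.
have Hnew : \sum_(e <- if combine e1 e2 is Some e then [:: e] else [::])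
              signed_weight z e = signed_weight z e1 + signed_weight z e2.
  by rewrite Hcomb; case: (combine e1 e2) => [e|]; rewrite ?big_seq1 ?big_nil.
by rewrite /excess !(big_cat, big_cons) /= Hnew; lia.
Qed.

Lemma excess_combine_star z T T' : combine_star T T' -> excess z T' = excess z T.
Proof. by elim=> // T0 T1 T2 /(excess_combine_step z) <-. Qed.

Lemma sum_signed_weight_eq0 e :
  eq_lhs e != set0 -> \sum_(y : {ffun 'I_n -> bool}) signed_weight y e = 0.
Proof.
case/set0Pn=> i Hi; set s := \sum_y _.
have Hs : s = - s.
  rewrite {1}/s (reindex_inj (inv_inj (flipK i))) /= -sumrN.
  by apply: eq_bigr => y _; rewrite signed_weight_flip Hi.
by lia.
Qed.

Lemma sum_excess_eq0 T :
  all (fun e => eq_lhs e != set0) T ->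
  \sum_(y : {ffun 'I_n -> bool}) excess y T = 0.
Proof.
move=> /allP HT; rewrite exchange_big /=.
by apply: big1_seq => e /andP [_ /HT]; apply: sum_signed_weight_eq0.
Qed.

End Excess.

Lemma sum_ge0_exists (R : realDomainType) (I : finType) (i0 : I) (F : I -> R) :
  0 <= \sum_i F i -> exists i, 0 <= F i.
Proof.
move=> Hsum; have [/existsP [i Hi] | /existsPn Hneg] := boolP [exists i, 0 <= F i].
  by exists i.
suff : \sum_i F i < 0 by rewrite ltNge Hsum.
rewrite (bigD1 i0) //= ltr_wnDr ?ltNge ?Hneg //.
by apply: sumr_le0 => i _; rewrite ltW // ltNge Hneg.
Qed.

Section Algorithm.
Variable n : nat.
Implicit Types (e : equation n) (S T : seq (equation n)).

Definition admissible e : bool := (eq_lhs e != set0) && (0 < eq_w e)%N.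

Definition reduced S : bool := all admissible S && uniq (map eq_lhs S).

Lemma combine_admissible e1 e2 e :
  admissible e1 -> combine e1 e2 = Some e -> admissible e.
Proof.
rewrite /combine /admissible; case: ifPn => // Hw /andP [HA _] [<-].
by rewrite /eq_lhs /eq_w /= HA lt0n.
Qed.

Lemma admissible_combine_step T T' :
  combine_step T T' -> all admissible T -> all admissible T'.
Proof.
case=> T1 T2 T3 e1 e2 _; rewrite !all_cat /= !all_cat /=.
move=> /andP [-> /andP [He1 /andP [-> /andP [_ ->]]]] /=.
by case E: (combine e1 e2) => [e|] //=; rewrite (combine_admissible He1 E).
Qed.

Lemma admissible_combine_star T T' :
  combine_star T T' -> all admissible T -> all admissible T'.
Proof. by elim=> // T0 T1 T2 /admissible_combine_step Hstep _ IH /Hstep /IH. Qed.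

Definition substitute e (l : 'I_n) e' : equation n :=
  if l \in eq_lhs e'
  then (symdiff (eq_lhs e) (eq_lhs e'), eq_rhs e (+) eq_rhs e', eq_w e')
  else e'.

Lemma substitute_weight e l e' : eq_w (substitute e l e') = eq_w e'.
Proof. by rewrite /substitute; case: ifP. Qed.

Lemma notin_substitute e l e' : l \in eq_lhs e -> l \notin eq_lhs (substitute e l e').
Proof.
rewrite /substitute; case: ifPn => // Hl' Hl.
by rewrite /eq_lhs /= /symdiff !inE -/(eq_lhs e) -/(eq_lhs e') Hl Hl'.
Qed.

Lemma satisfies_substitute (z : 'I_n -> bool) e l e' :
  satisfies z e -> satisfies z (substitute e l e') = satisfies z e'.
Proof.
rewrite /substitute !satisfiesE => /eqP He; case: ifP => // _.
rewrite /eq_lhs /eq_rhs /= parity_symdiff -/(eq_lhs e) -/(eq_rhs e) He.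
by case: (eq_rhs e); case: (parity z _); case: (e'.1.2).
Qed.

Lemma admissible_substitute e l e' :
  eq_lhs e' != eq_lhs e -> admissible e' -> admissible (substitute e l e').
Proof.
rewrite /substitute /admissible; case: ifP => // _ Hne /andP [_ Hw].
by rewrite /eq_lhs /eq_w /= Hw andbT symdiff_eq0 eq_sym.
Qed.

Lemma alg_step_reduced k S m S' m' : alg_step k S m S' m' -> reduced S -> reduced S'.
Proof.
case=> {}S {}m l S1 S2 e {}S' _ _ _ _ -> _ [Hstar HuS'].
have Hstar' : combine_star (map (substitute e l) (S1 ++ S2)) S' := Hstar.
rewrite /reduced HuS' andbT => /andP [Hadm HuS].
have Hperm : perm_eq (S1 ++ e :: S2) (e :: S1 ++ S2) by rewrite -cat1s perm_catCA.
move: HuS Hadm; rewrite (perm_uniq (perm_map eq_lhs Hperm)) (perm_all _ Hperm).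
case/andP=> Hfresh _ /andP [_ Hadm]; apply: (admissible_combine_star Hstar').
rewrite all_map; apply/allP => e' He' /=; apply: admissible_substitute.
  by apply: contraNneq Hfresh => <-; apply: map_f.
exact: (allP Hadm).
Qed.

Lemma alg_step_excess k S m S' m' :
  alg_step k S m S' m' -> all admissible S ->
  forall y : 'I_n -> bool, exists z, m'%:Z + excess y S' <= m%:Z + excess z S.
Proof.
case=> {}S {}m l S1 S2 e {}S' _ _ _ _ -> Hl [Hstar _].
have Hstar' : combine_star (map (substitute e l) (S1 ++ S2)) S' := Hstar.
rewrite all_cat /= => /and3P [_ /andP [_ Hw] _] y.
pose z : 'I_n -> bool := if satisfies y e then y else flip l y.
have Hz : satisfies z e by rewrite /z; case: ifPn; rewrite // satisfies_flip Hl.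
have Hzy e' : l \notin eq_lhs e' -> signed_weight z e' = signed_weight y e'.
  by move=> Hl'; rewrite /z; case: ifP; rewrite // signed_weight_flip (negbTE Hl').
have Hsub : excess z (S1 ++ S2) = excess y S'.
  rewrite (excess_combine_star y Hstar') /excess big_map.
  apply: eq_bigr => e' _; rewrite -Hzy ?notin_substitute //.
  by rewrite /signed_weight satisfies_substitute // substitute_weight.
exists z; rewrite /excess big_cat big_cons /= addrCA -big_cat -/(excess z _) Hsub.
by rewrite -/(excess y S') /signed_weight Hz; lia.
Qed.

Lemma alg_run_excess k S m S' m' :
  alg_run k S m S' m' -> reduced S ->
  reduced S' /\
  forall y : 'I_n -> bool, exists z, m'%:Z + excess y S' <= m%:Z + excess z S.
Proof.
elim=> [T m0 | S0 m0 S1 m1 S2 m2 Hstep _ IH] HS; first by split=> // y; exists y.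
have [HS2 Hrun] := IH (alg_step_reduced Hstep HS).
split=> // y; have [z1 Hz1] := Hrun y.
have [z Hz] := alg_step_excess Hstep (proj1 (andP HS)) z1.
by exists z; apply: le_trans Hz1 Hz.
Qed.

End Algorithm.

Local Close Scope ring_scope.

Theorem lemma2 (r : nat -> nat) (n k : nat) (S : seq (equation n)) :
  valid_instance r S ->
  uniq (map eq_lhs S) ->
  (exists S' : seq (equation n), alg_run k S 0 S' k) ->
  yes_instance S k.
Proof.
move=> [Hvalid _] Huniq [S' Hrun].
have HS : reduced S.
  rewrite /reduced Huniq andbT; apply/allP => e He.
  by have [HA _ Hw] := Hvalid e He; rewrite /admissible HA Hw.
have [/andP [HS' _] Hexcess] := alg_run_excess Hrun HS.
have [y Hy] : exists y : {ffun 'I_n -> bool}, (0 <= excess y S')%R.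
  apply: (sum_ge0_exists [ffun=> false]); rewrite sum_excess_eq0 //.
  by apply: sub_all HS' => e /andP [].
have [z Hz] := Hexcess y.
by exists z; rewrite -lez_nat PoszD -excess_sat_weight; lia.
Qed.
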